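(* Let $V\colon\mathbb{R}^3\to S^2$ define a line fibration of $\mathbb{R}^3$ whose induced plane field $\xi=\ker(V_1\,\mathrm{d}x_1+V_2\,\mathrm{d}x_2+V_3\,\mathrm{d}x_3)$ is a contact structure. Suppose that for every line $\ell$ of the fibration there exists a line $\ell'\neq\ell$ of the fibration parallel to $\ell$. Then $\mathrm{d}_pV$ has rank exactly $1$ at every point $p\in\mathbb{R}^3$. *)

From Stdlib Require Import Reals.
Open Scope R_scope.

Definition R3 : Type := (R * R * R)%type.

Definition coord (p : R3) (i : nat) : R :=
  match p with (x, y, z) => match i with 0%nat => x | 1%nat => y | _ => z end end.

Definition upd (p : R3) (i : nat) (t : R) : R3 :=
  match p with (x, y, z) =>
    match i with 0%nat => (t, y, z) | 1%nat => (x, t, z) | _ => (x, y, t) end end.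

Definition vadd (u v : R3) : R3 :=
  (coord u 0 + coord v 0, coord u 1 + coord v 1, coord u 2 + coord v 2).
Definition vscale (a : R) (u : R3) : R3 :=
  (a * coord u 0, a * coord u 1, a * coord u 2).
Definition vopp (u : R3) : R3 := vscale (-1) u.
Definition vzero : R3 := (0, 0, 0).
Definition dot (u v : R3) : R :=
  coord u 0 * coord v 0 + coord u 1 * coord v 1 + coord u 2 * coord v 2.

Definition continuous3 (f : R3 -> R) : Prop :=
  forall p eps, 0 < eps -> exists delta, 0 < delta /\
    forall q, dot (vadd q (vopp p)) (vadd q (vopp p)) < delta * delta ->
      Rabs (f q - f p) < eps.

Fixpoint Ck (k : nat) (f : R3 -> R) : Prop :=
  match k with
  | O => continuous3 f
  | S k' => forall i, (i < 3)%nat -> exists g : R3 -> R,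
      (forall p, derivable_pt_lim (fun t => f (upd p i t)) (coord p i) (g p))
      /\ Ck k' g
  end.

Definition smooth3 (f : R3 -> R) : Prop := forall k, Ck k f.

(* V : R^3 -> S^2 defines a (smooth, oriented) line fibration: V is smooth,
   unit-valued, and constant along each line p + t V(p); the lines
   {p + t V(p)} are then the fibres, and they partition R^3. *)
Definition line_fibration (V : R3 -> R3) : Prop :=
  (forall i, (i < 3)%nat -> smooth3 (fun p => coord (V p) i))
  /\ (forall p, dot (V p) (V p) = 1)
  /\ (forall p t, V (vadd p (vscale t (V p))) = V p).

(* DV p i j = partial_j V_i (p), i.e. the matrix of d_p V. *)
Definition is_jacobian (V : R3 -> R3) (DV : R3 -> nat -> nat -> R) : Prop :=
  forall p i j, (i < 3)%nat -> (j < 3)%nat ->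
    derivable_pt_lim (fun t => coord (V (upd p j t)) i) (coord p j) (DV p i j).

Definition curl (M : nat -> nat -> R) : R3 :=
  (M 2%nat 1%nat - M 1%nat 2%nat, M 0%nat 2%nat - M 2%nat 0%nat,
   M 1%nat 0%nat - M 0%nat 1%nat).

(* alpha = V1 dx1 + V2 dx2 + V3 dx3; alpha /\ d alpha = (V . curl V) dx1dx2dx3.
   xi = ker alpha is a contact structure iff this never vanishes. *)
Definition is_contact (V : R3 -> R3) (DV : R3 -> nat -> nat -> R) : Prop :=
  forall p, dot (V p) (curl (DV p)) <> 0.

Definition on_line (V : R3 -> R3) (p q : R3) : Prop :=
  exists t, q = vadd p (vscale t (V p)).

Definition every_line_has_parallel (V : R3 -> R3) : Prop :=
  forall p, exists q, ~ on_line V p q /\ (V q = V p \/ V q = vopp (V p)).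

Definition mat_app (M : nat -> nat -> R) (v : R3) : R3 :=
  (M 0%nat 0%nat * coord v 0 + M 0%nat 1%nat * coord v 1 + M 0%nat 2%nat * coord v 2,
   M 1%nat 0%nat * coord v 0 + M 1%nat 1%nat * coord v 1 + M 1%nat 2%nat * coord v 2,
   M 2%nat 0%nat * coord v 0 + M 2%nat 1%nat * coord v 1 + M 2%nat 2%nat * coord v 2).

Definition rank_one (M : nat -> nat -> R) : Prop :=
  (exists v, mat_app M v <> vzero) /\
  (forall v w, exists a b, (a <> 0 \/ b <> 0) /\
     vadd (vscale a (mat_app M v)) (vscale b (mat_app M w)) = vzero).

(* If [d_pV] had rank 2 then, since [|V| = 1], its image would be the whole plane [u^perp],
   [u = V p].  Take a line of the fibration through [q], parallel to the line through [p].
   Moving the base point [x] near [p], the direction [V x] tilts away from [u] to first order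
   in any prescribed direction of [u^perp], so the coplanarity defect [(V x * u) . (q - x)] of
   the line through [x] with the line through [q] takes both signs along a short segment.  By
   the intermediate value theorem some line of the fibration then meets the line through [q]
   without being parallel to it, which is impossible for disjoint lines.  Rank 0 is excluded
   because then [curl V = 0] at [p], contradicting the contact condition. *)

From Stdlib Require Import Reals Lra Lia Classical.
Open Scope R_scope.

Definition cross (a b : R3) : R3 :=
  (coord a 1 * coord b 2 - coord a 2 * coord b 1,
   coord a 2 * coord b 0 - coord a 0 * coord b 2,
   coord a 0 * coord b 1 - coord a 1 * coord b 0).

Definition nrm (a : R3) : R := sqrt (dot a a).

Lemma vec_ext (a b : R3) :
  coord a 0 = coord b 0 -> coord a 1 = coord b 1 -> coord a 2 = coord b 2 -> a = b.
Proof. destruct a as [[a0 a1] a2], b as [[b0 b1] b2]; simpl; intros; subst; reflexivity. Qed.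

Ltac vec_expand :=
  repeat match goal with v : R3 |- _ => destruct v as [[? ?] ?] end;
  unfold cross, dot, vadd, vscale, vopp, vzero, mat_app in *; simpl in *.

Ltac vec_ring := vec_expand; try (apply vec_ext; simpl); ring.

Lemma dot_comm a b : dot a b = dot b a.
Proof. vec_ring. Qed.

Lemma dot_vadd_l a b c : dot (vadd a b) c = dot a c + dot b c.
Proof. vec_ring. Qed.

Lemma dot_vscale_l k a c : dot (vscale k a) c = k * dot a c.
Proof. vec_ring. Qed.

Lemma dot_vzero_r a : dot a vzero = 0.
Proof. vec_ring. Qed.

Lemma dot_self_ge0 a : 0 <= dot a a.
Proof. vec_expand; nra. Qed.

Lemma dot_self_eq0 a : dot a a = 0 -> a = vzero.
Proof. vec_expand; intros H; apply vec_ext; simpl; nra. Qed.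

Lemma vscale_vopp k a : vscale k (vopp a) = vscale (- k) a.
Proof. vec_ring. Qed.

Lemma cross_self a : cross a a = vzero.
Proof. vec_ring. Qed.

Lemma cross_vopp_self a : cross (vopp a) a = vzero.
Proof. vec_ring. Qed.

Lemma dot_cross_r a b : dot (cross a b) b = 0.
Proof. vec_ring. Qed.

Lemma dot_cross_l_self a b : dot a (cross a b) = 0.
Proof. vec_ring. Qed.

Lemma dot_cross_vadd_self u Y c : dot (cross (vadd u Y) u) c = dot Y (cross u c).
Proof. vec_ring. Qed.

Lemma cross_cross a b c :
  cross a (cross b c) = vadd (vscale (dot a c) b) (vscale (- dot a b) c).
Proof. vec_ring. Qed.

Lemma lagrange_identity a b :
  dot (cross a b) (cross a b) = dot a a * dot b b - dot a b * dot a b.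
Proof. vec_ring. Qed.

Lemma coplanarity_expand u Y p q z :
  dot (cross (vadd u Y) u) (vadd q (vopp (vadd p z)))
  = dot Y (cross u (vadd q (vopp p))) - dot (cross Y u) z.
Proof. vec_ring. Qed.

Lemma vadd_split a u X : a = vadd u (vadd X (vadd a (vopp (vadd u X)))).
Proof. vec_ring. Qed.

Lemma line_shift p a w sg s :
  vadd (vadd p (vscale sg a)) (vscale s w) = vadd p (vadd (vscale s w) (vscale sg a)).
Proof. vec_ring. Qed.

Lemma vscale1_sub_eq p q y : vscale 1 (vadd q (vopp p)) = y -> q = vadd p y.
Proof. intros <-. vec_ring. Qed.

Lemma vadd_sub_decomp x q a b al be :
  vadd q (vopp x) = vadd (vscale al a) (vscale be b) ->
  vadd x (vscale al a) = vadd q (vscale (- be) b).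
Proof. intros E. revert E. vec_expand. intros E. injection E; intros. apply vec_ext; simpl; lra. Qed.

Lemma cross_eq0_collinear a d :
  cross a d = vzero -> vscale (dot a a) d = vscale (dot a d) a.
Proof.
  intros H. pose proof (cross_cross a a d) as E. rewrite H in E.
  revert E. vec_expand. intros E. injection E; intros. apply vec_ext; simpl; lra.
Qed.

(* Gram: [|a x b|^2 y = (y.a |b|^2 - y.b a.b) a + (y.b |a|^2 - y.a a.b) b + ((a x b).y) (a x b)]. *)
Lemma coplanar_decomp a b y :
  cross a b <> vzero -> dot (cross a b) y = 0 ->
  exists al be, y = vadd (vscale al a) (vscale be b).
Proof.
  intros Hab Hy. set (g := dot (cross a b) (cross a b)).
  assert (Hg : g <> 0) by (intros H; apply Hab, dot_self_eq0, H).
  exists ((dot y a * dot b b - dot y b * dot a b) / g),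
         ((dot y b * dot a a - dot y a * dot a b) / g).
  assert (E : vscale g y = vadd (vadd (vscale (dot y a * dot b b - dot y b * dot a b) a)
       (vscale (dot y b * dot a a - dot y a * dot a b) b)) (vscale (dot (cross a b) y) (cross a b)))
    by (unfold g; vec_ring).
  rewrite Hy in E. clearbody g. revert E. vec_expand. intros E. injection E; intros.
  apply vec_ext; simpl; apply (Rmult_eq_reg_l g); try exact Hg;
    field_simplify; try exact Hg; lra.
Qed.

Lemma Rabs_le_of_sqr_le x y : 0 <= y -> x * x <= y * y -> Rabs x <= y.
Proof.
  intros Hy Hxy. pose proof (Rabs_pos x).
  assert (Rabs x * Rabs x = x * x) by (rewrite <- Rabs_mult; apply Rabs_right; nra).
  nra.
Qed.

Lemma nrm_ge0 a : 0 <= nrm a.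
Proof. apply sqrt_pos. Qed.

Lemma nrm_sqr a : nrm a * nrm a = dot a a.
Proof. apply sqrt_sqrt, dot_self_ge0. Qed.

Lemma nrm_le a k : 0 <= k -> dot a a <= k * k -> nrm a <= k.
Proof.
  intros Hk Ha. pose proof (nrm_sqr a). pose proof (nrm_ge0 a).
  rewrite <- (Rabs_right (nrm a)) by lra. apply Rabs_le_of_sqr_le; nra.
Qed.

Lemma dot_lt_of_nrm_lt a k : nrm a < k -> dot a a < k * k.
Proof. intros. rewrite <- nrm_sqr. pose proof (nrm_ge0 a). nra. Qed.

Lemma nrm_pos a : a <> vzero -> 0 < nrm a.
Proof.
  intros Ha. destruct (nrm_ge0 a) as [|H]; auto.
  exfalso. apply Ha, dot_self_eq0. rewrite <- nrm_sqr, <- H. ring.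
Qed.

Lemma nrm_unit u : dot u u = 1 -> nrm u = 1.
Proof. intros Hu. unfold nrm. rewrite Hu. apply sqrt_1. Qed.

Lemma Rabs_dot_le a b : Rabs (dot a b) <= nrm a * nrm b.
Proof.
  apply Rabs_le_of_sqr_le; [apply Rmult_le_pos; apply nrm_ge0|].
  replace (nrm a * nrm b * (nrm a * nrm b)) with ((nrm a * nrm a) * (nrm b * nrm b)) by ring.
  rewrite !nrm_sqr. pose proof (lagrange_identity a b). pose proof (dot_self_ge0 (cross a b)).
  nra.
Qed.

Lemma nrm_vadd_le a b : nrm (vadd a b) <= nrm a + nrm b.
Proof.
  apply nrm_le; [pose proof (nrm_ge0 a); pose proof (nrm_ge0 b); lra|].
  pose proof (Rabs_dot_le a b). pose proof (Rle_abs (dot a b)).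
  pose proof (nrm_sqr a). pose proof (nrm_sqr b).
  assert (dot (vadd a b) (vadd a b) = dot a a + 2 * dot a b + dot b b) by vec_ring.
  nra.
Qed.

Lemma nrm_vscale_le c a : nrm (vscale c a) <= Rabs c * nrm a.
Proof.
  pose proof (nrm_ge0 a). pose proof (Rabs_pos c).
  apply nrm_le; [nra|].
  replace (Rabs c * nrm a * (Rabs c * nrm a)) with ((Rabs c * Rabs c) * (nrm a * nrm a)) by ring.
  rewrite nrm_sqr, <- Rabs_mult, Rabs_right by nra. vec_expand. nra.
Qed.

Lemma nrm_cross_le a b : nrm (cross a b) <= nrm a * nrm b.
Proof.
  pose proof (nrm_ge0 a). pose proof (nrm_ge0 b).
  apply nrm_le; [nra|].
  replace (nrm a * nrm b * (nrm a * nrm b)) with ((nrm a * nrm a) * (nrm b * nrm b)) by ring.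
  rewrite !nrm_sqr, lagrange_identity. nra.
Qed.

Lemma nrm_segment_le v w s sg :
  Rabs s <= sg -> nrm (vadd (vscale s w) (vscale sg v)) <= sg * (nrm v + nrm w).
Proof.
  intros Hs. pose proof (Rabs_pos s).
  pose proof (nrm_vadd_le (vscale s w) (vscale sg v)).
  pose proof (nrm_vscale_le s w). pose proof (nrm_vscale_le sg v).
  pose proof (nrm_ge0 v). pose proof (nrm_ge0 w). rewrite (Rabs_right sg) in * by lra.
  assert (Rabs s * nrm w <= sg * nrm w) by (apply Rmult_le_compat_r; lra). nra.
Qed.

Lemma mat_app_lin M al be x y :
  mat_app M (vadd (vscale al x) (vscale be y)) =
  vadd (vscale al (mat_app M x)) (vscale be (mat_app M y)).
Proof. vec_ring. Qed.

Lemma indep_cross_neq0 a b :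
  (forall al be, (al <> 0 \/ be <> 0) -> vadd (vscale al a) (vscale be b) <> vzero) ->
  cross a b <> vzero.
Proof.
  intros Hind Hab. apply cross_eq0_collinear in Hab.
  destruct (Req_dec (dot a a) 0) as [Ha|Ha].
  - apply (Hind 1 0); [left; lra|]. apply dot_self_eq0 in Ha. subst a. vec_ring.
  - apply (Hind (dot a b) (- dot a a)); [right; lra|].
    revert Hab. vec_expand. intros E. injection E; intros. apply vec_ext; simpl; lra.
Qed.

Lemma mat_app_onto_orth M u a b :
  u <> vzero -> (forall z, dot u (mat_app M z) = 0) ->
  (forall al be, (al <> 0 \/ be <> 0) ->
     vadd (vscale al (mat_app M a)) (vscale be (mat_app M b)) <> vzero) ->
  forall y, dot u y = 0 -> exists z, mat_app M z = y.
Proof.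
  intros Hu Horth Hind y Hy.
  (* [Ma * Mb] is parallel to [u], hence normal to every [y] in [u^perp]. *)
  set (c := cross (mat_app M a) (mat_app M b)).
  assert (Hc : vscale (dot u u) c = vscale (dot u c) u).
  { apply cross_eq0_collinear. unfold c. rewrite cross_cross.
    rewrite !Horth. vec_ring. }
  assert (Hcy : dot c y = 0).
  { assert (Huu : dot u u <> 0) by (intros H; apply Hu, dot_self_eq0, H).
    apply (Rmult_eq_reg_l (dot u u)); [|exact Huu].
    replace (dot u u * dot c y) with (dot (vscale (dot u u) c) y) by vec_ring.
    rewrite Hc. replace (dot (vscale (dot u c) u) y) with (dot u c * dot u y) by vec_ring.
    rewrite Hy. ring. }
  destruct (coplanar_decomp _ _ y (indep_cross_neq0 _ _ Hind) Hcy) as [al [be ->]].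
  exists (vadd (vscale al a) (vscale be b)). apply mat_app_lin.
Qed.

Lemma curl_eq0_of_mat_app_eq0 M : (forall v, mat_app M v = vzero) -> curl M = vzero.
Proof.
  intros H. pose proof (H (1, 0, 0)) as E0. pose proof (H (0, 1, 0)) as E1.
  pose proof (H (0, 0, 1)) as E2. unfold mat_app, vzero in *; simpl in *.
  injection E0; injection E1; injection E2; intros. unfold curl. apply vec_ext; simpl; lra.
Qed.

Lemma MVT_theta (f f' : R -> R) a h :
  (forall t, derivable_pt_lim f t (f' t)) ->
  exists th, 0 <= th <= 1 /\ f (a + h) - f a = h * f' (a + th * h).
Proof.
  intros Hd.
  assert (Hpos : forall a h, 0 < h ->
            exists th, 0 <= th <= 1 /\ f (a + h) - f a = h * f' (a + th * h)).
  { clear a h. intros a h Hh.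
    destruct (MVT_cor2 f f' a (a + h)) as [c [Hc Hca]]; [lra|intros; apply Hd|].
    exists ((c - a) / h).
    assert (Hc' : (c - a) / h * h = c - a) by (field; lra).
    split; [split|].
    - apply (Rmult_le_reg_r h); lra.
    - apply (Rmult_le_reg_r h); lra.
    - rewrite Hc'. replace (a + (c - a)) with c by ring. lra. }
  destruct (Rtotal_order h 0) as [Hh|[->|Hh]].
  - destruct (Hpos (a + h) (- h)) as [th [Hth E]]; [lra|].
    exists (1 - th). split; [lra|].
    replace (a + h + - h) with a in E by ring.
    replace (a + (1 - th) * h) with (a + h + th * - h) by ring. lra.
  - exists 0. split; [lra|]. rewrite Rplus_0_r. ring.
  - apply Hpos, Hh.
Qed.

Lemma increment_le (f f' : R -> R) a h c eps :
  (forall t, derivable_pt_lim f t (f' t)) ->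
  (forall th, 0 <= th <= 1 -> Rabs (f' (a + th * h) - c) <= eps) ->
  Rabs (f (a + h) - f a - c * h) <= eps * Rabs h.
Proof.
  intros Hd Hc. destruct (MVT_theta f f' a h Hd) as [th [Hth ->]].
  replace (h * f' (a + th * h) - c * h) with (h * (f' (a + th * h) - c)) by ring.
  rewrite Rabs_mult, Rmult_comm. apply Rmult_le_compat_r; [apply Rabs_pos|auto].
Qed.

Lemma continuous3_family (G : nat -> R3 -> R) :
  (forall j, (j < 3)%nat -> continuous3 (G j)) ->
  forall p eps, 0 < eps -> exists d, 0 < d /\ forall j q, (j < 3)%nat ->
    dot (vadd q (vopp p)) (vadd q (vopp p)) < d * d -> Rabs (G j q - G j p) < eps.
Proof.
  intros HG p eps He.
  destruct (HG 0%nat ltac:(lia) p eps He) as [d0 [Hd0 C0]].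
  destruct (HG 1%nat ltac:(lia) p eps He) as [d1 [Hd1 C1]].
  destruct (HG 2%nat ltac:(lia) p eps He) as [d2 [Hd2 C2]].
  set (d := Rmin d0 (Rmin d1 d2)).
  assert (Hd : 0 < d) by (apply Rmin_pos; [|apply Rmin_pos]; auto).
  assert (Hle : d <= d0 /\ d <= d1 /\ d <= d2).
  { unfold d. pose proof (Rmin_l d0 (Rmin d1 d2)). pose proof (Rmin_r d0 (Rmin d1 d2)).
    pose proof (Rmin_l d1 d2). pose proof (Rmin_r d1 d2). lra. }
  exists d. split; [exact Hd|]. intros j q Hj Hq.
  destruct j as [|[|[|j]]]; [apply C0 | apply C1 | apply C2 | lia]; nra.
Qed.

Lemma C1_increment (g : R3 -> R) (G : nat -> R3 -> R) :
  (forall j r, (j < 3)%nat -> derivable_pt_lim (fun t => g (upd r j t)) (coord r j) (G j r)) ->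
  (forall j, (j < 3)%nat -> continuous3 (G j)) ->
  forall p eps, 0 < eps -> exists rho, 0 < rho /\ forall z, dot z z < rho * rho ->
    Rabs (g (vadd p z) - g p
          - (G 0%nat p * coord z 0 + G 1%nat p * coord z 1 + G 2%nat p * coord z 2))
    <= eps * (Rabs (coord z 0) + Rabs (coord z 1) + Rabs (coord z 2)).
Proof.
  intros Hd HG p eps He.
  destruct (continuous3_family G HG p eps He) as [rho [Hrho Hclose]].
  exists rho. split; [exact Hrho|]. intros z Hz.
  destruct p as [[p0 p1] p2], z as [[z0 z1] z2]. unfold dot in Hz; unfold vadd at 1; simpl in Hz |- *.
  assert (Hth : forall th, 0 <= th <= 1 -> forall x, th * x * (th * x) <= x * x)
    by (intros th Hth x; assert (th * th <= 1) by nra; nra).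
  assert (E0 : Rabs (g (p0 + z0, p1, p2) - g (p0, p1, p2) - G 0%nat (p0, p1, p2) * z0)
               <= eps * Rabs z0).
  { apply (increment_le (fun t => g (t, p1, p2)) (fun t => G 0%nat (t, p1, p2)));
      [intros t; exact (Hd 0%nat (t, p1, p2) ltac:(lia))|].
    intros th Hth0. apply Rlt_le, Hclose; [lia|].
    unfold dot; simpl. pose proof (Hth th Hth0 z0). nra. }
  assert (E1 : Rabs (g (p0 + z0, p1 + z1, p2) - g (p0 + z0, p1, p2) - G 1%nat (p0, p1, p2) * z1)
               <= eps * Rabs z1).
  { apply (increment_le (fun t => g (p0 + z0, t, p2)) (fun t => G 1%nat (p0 + z0, t, p2)));
      [intros t; exact (Hd 1%nat (p0 + z0, t, p2) ltac:(lia))|].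
    intros th Hth1. apply Rlt_le, Hclose; [lia|].
    unfold dot; simpl. pose proof (Hth th Hth1 z1). nra. }
  assert (E2 : Rabs (g (p0 + z0, p1 + z1, p2 + z2) - g (p0 + z0, p1 + z1, p2)
                     - G 2%nat (p0, p1, p2) * z2) <= eps * Rabs z2).
  { apply (increment_le (fun t => g (p0 + z0, p1 + z1, t))
                        (fun t => G 2%nat (p0 + z0, p1 + z1, t)));
      [intros t; exact (Hd 2%nat (p0 + z0, p1 + z1, t) ltac:(lia))|].
    intros th Hth2. apply Rlt_le, Hclose; [lia|].
    unfold dot; simpl. pose proof (Hth th Hth2 z2). nra. }
  match goal with |- Rabs ?X <= _ =>
    match type of E0 with Rabs ?A <= _ =>
    match type of E1 with Rabs ?B <= _ =>
    match type of E2 with Rabs ?C <= _ =>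
      replace X with (A + B + C) by ring;
      pose proof (Rabs_triang (A + B) C); pose proof (Rabs_triang A B) end end end end.
  lra.
Qed.

Lemma sum_abs_coord_sqr_le z :
  (Rabs (coord z 0) + Rabs (coord z 1) + Rabs (coord z 2))
  * (Rabs (coord z 0) + Rabs (coord z 1) + Rabs (coord z 2)) <= 3 * dot z z.
Proof.
  destruct z as [[z0 z1] z2]. unfold dot; simpl.
  assert (forall x, Rabs x * Rabs x = x * x) as Hsq
    by (intros x; rewrite <- Rabs_mult; apply Rabs_right; nra).
  rewrite <- (Hsq z0), <- (Hsq z1), <- (Hsq z2).
  pose proof (Rle_0_sqr (Rabs z0 - Rabs z1)). pose proof (Rle_0_sqr (Rabs z1 - Rabs z2)).
  pose proof (Rle_0_sqr (Rabs z0 - Rabs z2)). unfold Rsqr in *. nra.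
Qed.

Section Jacobian.
Variables (V : R3 -> R3) (DV : R3 -> nat -> nat -> R).
Hypothesis V_jac : is_jacobian V DV.

Lemma jacobian_orth_of_unit :
  (forall r, dot (V r) (V r) = 1) -> forall p z, dot (V p) (mat_app (DV p) z) = 0.
Proof.
  intros Hu p z.
  assert (Hcol : forall j, (j < 3)%nat ->
    coord (V p) 0 * DV p 0%nat j + coord (V p) 1 * DV p 1%nat j
    + coord (V p) 2 * DV p 2%nat j = 0).
  { intros j Hj.
    pose proof (V_jac p 0%nat j ltac:(lia) Hj) as D0.
    pose proof (V_jac p 1%nat j ltac:(lia) Hj) as D1.
    pose proof (V_jac p 2%nat j ltac:(lia) Hj) as D2.
    pose proof (derivable_pt_lim_plus _ _ _ _ _ (derivable_pt_lim_plus _ _ _ _ _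
       (derivable_pt_lim_mult _ _ _ _ _ D0 D0) (derivable_pt_lim_mult _ _ _ _ _ D1 D1))
       (derivable_pt_lim_mult _ _ _ _ _ D2 D2)) as Dsq.
    apply (derivable_pt_lim_ext _ (fct_cte 1)) in Dsq;
      [|intros t; unfold plus_fct, mult_fct, fct_cte; rewrite <- (Hu (upd p j t)); reflexivity].
    pose proof (uniqueness_limite _ _ _ _ Dsq (derivable_pt_lim_const 1 _)) as E.
    replace (upd p j (coord p j)) with p in E
      by (destruct p as [[? ?] ?]; destruct j as [|[|[|j]]]; reflexivity || lia).
    lra. }
  pose proof (f_equal (Rmult (coord z 0)) (Hcol 0%nat ltac:(lia))).
  pose proof (f_equal (Rmult (coord z 1)) (Hcol 1%nat ltac:(lia))).
  pose proof (f_equal (Rmult (coord z 2)) (Hcol 2%nat ltac:(lia))).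
  unfold dot, mat_app. destruct (V p) as [[u0 u1] u2], z as [[z0 z1] z2]. simpl in *.
  lra.
Qed.

Hypothesis V_C1 : forall i, (i < 3)%nat -> Ck 1 (fun p => coord (V p) i).

Lemma jacobian_continuous i j :
  (i < 3)%nat -> (j < 3)%nat -> continuous3 (fun r => DV r i j).
Proof.
  intros Hi Hj. destruct (V_C1 i Hi j Hj) as [g [Hg Cg]].
  intros p eps He. destruct (Cg p eps He) as [d [Hd C]]. exists d. split; [exact Hd|].
  intros q Hq. rewrite <- !(uniqueness_limite _ _ _ _ (Hg _) (V_jac _ i j Hi Hj)). auto.
Qed.

Lemma jacobian_approx p eta : 0 < eta -> exists rho, 0 < rho /\ forall z, nrm z < rho ->
  nrm (vadd (V (vadd p z)) (vopp (vadd (V p) (mat_app (DV p) z)))) <= eta * nrm z.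
Proof.
  intros He.
  assert (Hcomp : forall i, (i < 3)%nat -> exists rho, 0 < rho /\ forall z, dot z z < rho * rho ->
    Rabs (coord (V (vadd p z)) i - coord (V p) i - coord (mat_app (DV p) z) i)
    <= eta / 3 * (Rabs (coord z 0) + Rabs (coord z 1) + Rabs (coord z 2))).
  { intros i Hi.
    destruct (C1_increment (fun r => coord (V r) i) (fun j r => DV r i j)
                (fun j r Hj => V_jac r i j Hi Hj)
                (fun j Hj => jacobian_continuous i j Hi Hj) p (eta / 3) ltac:(lra))
      as [rho [Hrho H]].
    exists rho. split; [exact Hrho|]. intros z Hz.
    replace (coord (mat_app (DV p) z) i)
      with (DV p i 0%nat * coord z 0 + DV p i 1%nat * coord z 1 + DV p i 2%nat * coord z 2)
      by (destruct z as [[? ?] ?]; destruct i as [|[|[|i]]]; simpl; lra || lia).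
    apply H, Hz. }
  destruct (Hcomp 0%nat ltac:(lia)) as [r0 [Hr0 C0]].
  destruct (Hcomp 1%nat ltac:(lia)) as [r1 [Hr1 C1]].
  destruct (Hcomp 2%nat ltac:(lia)) as [r2 [Hr2 C2]].
  set (rho := Rmin r0 (Rmin r1 r2)).
  assert (Hle : rho <= r0 /\ rho <= r1 /\ rho <= r2).
  { unfold rho. pose proof (Rmin_l r0 (Rmin r1 r2)). pose proof (Rmin_r r0 (Rmin r1 r2)).
    pose proof (Rmin_l r1 r2). pose proof (Rmin_r r1 r2). lra. }
  exists rho. split; [apply Rmin_pos; [|apply Rmin_pos]; auto|]. intros z Hz.
  pose proof (dot_lt_of_nrm_lt z rho Hz) as Hzz. pose proof (nrm_ge0 z).
  specialize (C0 z ltac:(nra)). specialize (C1 z ltac:(nra)). specialize (C2 z ltac:(nra)).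
  pose proof (sum_abs_coord_sqr_le z). rewrite <- nrm_sqr in *.
  set (S := Rabs (coord z 0) + Rabs (coord z 1) + Rabs (coord z 2)) in *.
  assert (HS : 0 <= S) by (unfold S; pose proof (Rabs_pos (coord z 0));
    pose proof (Rabs_pos (coord z 1)); pose proof (Rabs_pos (coord z 2)); lra).
  apply nrm_le; [nra|].
  assert (Sq : forall x, Rabs x <= eta / 3 * S -> x * x <= eta / 3 * S * (eta / 3 * S))
    by (intros x Hx; rewrite <- (Rabs_right (eta / 3 * S)) in Hx by nra;
        apply Rsqr_le_abs_1 in Hx; exact Hx).
  apply Sq in C0. apply Sq in C1. apply Sq in C2.
  revert C0 C1 C2. generalize (V (vadd p z)) (V p) (mat_app (DV p) z). intros a b c.
  vec_expand. nra.
Qed.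

End Jacobian.

Lemma continuous3_coord i : continuous3 (fun r => coord r i).
Proof.
  intros p eps He. exists eps. split; [exact He|]. intros q Hq.
  assert (Hi : (coord q i - coord p i) * (coord q i - coord p i)
               <= dot (vadd q (vopp p)) (vadd q (vopp p))).
  { destruct p as [[p0 p1] p2], q as [[q0 q1] q2].
    unfold dot, vadd, vopp, vscale; destruct i as [|[|[|i]]]; simpl;
      pose proof (Rle_0_sqr (q0 - p0)); pose proof (Rle_0_sqr (q1 - p1));
      pose proof (Rle_0_sqr (q2 - p2)); unfold Rsqr in *; nra. }
  pose proof (Rsqr_abs (coord q i - coord p i)). pose proof (Rabs_pos (coord q i - coord p i)).
  unfold Rsqr in *. nra.
Qed.

Lemma continuity_along_line (g : R3 -> R) a w :
  continuous3 g -> continuity (fun s => g (vadd a (vscale s w))).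
Proof.
  intros Hg s0 eps He. destruct (Hg (vadd a (vscale s0 w)) eps He) as [d [Hd H]].
  pose proof (nrm_ge0 w) as Hw. pose proof (nrm_sqr w).
  exists (d / (nrm w + 1)). split; [apply Rdiv_lt_0_compat; lra|].
  intros s [_ Hs]. apply H. unfold R_dist in Hs.
  replace (dot _ _) with ((s - s0) * (s - s0) * dot w w) by vec_ring.
  assert (Hs' : Rabs (s - s0) * (nrm w + 1) < d).
  { apply (Rmult_lt_compat_r (nrm w + 1)) in Hs; [|lra].
    replace (d / (nrm w + 1) * (nrm w + 1)) with d in Hs by (field; lra). exact Hs. }
  pose proof (Rsqr_abs (s - s0)). pose proof (Rabs_pos (s - s0)). unfold Rsqr in *.
  assert (Rabs (s - s0) * nrm w < d) by nra.
  assert (0 <= Rabs (s - s0) * nrm w) by nra.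
  replace ((s - s0) * (s - s0) * dot w w)
    with ((Rabs (s - s0) * nrm w) * (Rabs (s - s0) * nrm w)) by (rewrite <- nrm_sqr; nra).
  nra.
Qed.

Lemma continuity_coplanarity (X Y : R -> R3) c q :
  (forall i, (i < 3)%nat -> continuity (fun s => coord (X s) i)) ->
  (forall i, (i < 3)%nat -> continuity (fun s => coord (Y s) i)) ->
  continuity (fun s => dot (cross (X s) c) (vadd q (vopp (Y s)))).
Proof.
  intros HX HY. unfold dot, cross, vadd, vopp, vscale; simpl.
  repeat first [ apply continuity_plus | apply continuity_minus | apply continuity_opp
               | apply continuity_mult
               | apply HX; lia | apply HY; lia
               | apply continuity_const; intros ? ?; reflexivity ].
Qed.

Lemma near_linear_root (f : R -> R) sg c :
  continuity f -> 0 < sg -> 0 < c ->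
  (forall s, Rabs s <= sg -> Rabs (f s - s * c) <= sg * c / 2) ->
  exists s0, Rabs s0 <= sg /\ f s0 = 0.
Proof.
  intros Hf Hsg Hc Hlin.
  pose proof (Hlin sg ltac:(rewrite Rabs_right; lra)) as F1.
  pose proof (Hlin (- sg) ltac:(rewrite Rabs_Ropp, Rabs_right; lra)) as F2.
  pose proof (Rle_abs (- (f sg - sg * c))) as G1. rewrite Rabs_Ropp in G1.
  pose proof (Rle_abs (f (- sg) - - sg * c)) as G2.
  assert (0 < sg * c) by (apply Rmult_lt_0_compat; lra).
  destruct (IVT_cor f (- sg) sg Hf ltac:(lra) ltac:(nra)) as [s0 [Hs0 Hf0]].
  exists s0. split; [apply Rabs_le; lra|exact Hf0].
Qed.

Lemma exists_small_pos a b K :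
  0 < a -> 0 < b -> 0 < K -> exists sg, 0 < sg /\ sg * K < a /\ sg * K <= b.
Proof.
  intros Ha Hb HK. exists (Rmin (a / 2) b / K).
  replace (Rmin (a / 2) b / K * K) with (Rmin (a / 2) b) by (field; lra).
  pose proof (Rmin_l (a / 2) b). pose proof (Rmin_r (a / 2) b).
  split; [apply Rdiv_lt_0_compat; [apply Rmin_pos|]; lra | lra].
Qed.

Lemma transversal_budget mu sg t e :
  0 < mu -> 0 <= sg -> 0 <= t -> 0 <= e -> e <= sg * mu / 4 -> t <= mu / 9 ->
  e * mu + (2 * sg * mu + e) * t <= sg * (mu * mu) / 2.
Proof.
  intros Hmu Hsg Ht He Hesg Htmu.
  assert (e * mu <= sg * mu / 4 * mu) by (apply Rmult_le_compat_r; lra).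
  assert ((2 * sg * mu + e) * t <= (9 / 4 * sg * mu) * (mu / 9))
    by (apply Rmult_le_compat; nra).
  lra.
Qed.

Lemma line_fibration_meet (V : R3 -> R3) x y s r :
  (forall x t, V (vadd x (vscale t (V x))) = V x) ->
  vadd x (vscale s (V x)) = vadd y (vscale r (V y)) -> V x = V y.
Proof. intros HV E. rewrite <- (HV x s), <- (HV y r), E. reflexivity. Qed.

Section TransversalLine.
Variables (V : R3 -> R3) (M : nat -> nat -> R) (p q : R3).
Hypothesis V_cont : forall i, (i < 3)%nat -> continuous3 (fun r => coord (V r) i).
Hypothesis V_unit : dot (V p) (V p) = 1.

(* [m] is normal to the plane containing the line through [p] and the point [q], and
   [(m, n)] is an orthogonal basis of [u^perp]; [err] is the first-order remainder of [V]. *)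
Let u := V p.
Let m := cross u (vadd q (vopp p)).
Let n := cross u m.
Let err z := vadd (V (vadd p z)) (vopp (vadd u (mat_app M z))).

Lemma V_shift_decomp z : V (vadd p z) = vadd u (vadd (mat_app M z) (err z)).
Proof. apply vadd_split. Qed.

Lemma nrm_n_eq_nrm_m : nrm n = nrm m.
Proof.
  unfold nrm. f_equal. unfold n. rewrite lagrange_identity.
  replace (dot u u) with 1 by exact (eq_sym V_unit).
  replace (dot u m) with 0 by (symmetry; apply dot_cross_l_self). ring.
Qed.

(* For a base point [x], [(V x * u) . (q - x)] vanishes iff the line through [x] is coplanar
   with the line through [q] parallel to [u]. *)
Lemma transversal_defect z s sg eta :
  0 <= sg -> Rabs s <= sg -> mat_app M z = vadd (vscale s m) (vscale sg n) ->
  nrm (err z) <= eta * nrm z ->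
  Rabs (dot (cross (V (vadd p z)) u) (vadd q (vopp (vadd p z))) - s * dot m m)
  <= eta * nrm z * nrm m + (2 * sg * nrm m + eta * nrm z) * nrm z.
Proof.
  intros Hsg Hs HMz He. rewrite V_shift_decomp, HMz, coplanarity_expand.
  set (X := vadd (vscale s m) (vscale sg n)) in *. set (e := err z) in *.
  assert (HXm : dot X m = s * dot m m).
  { unfold X. rewrite dot_vadd_l, !dot_vscale_l. unfold n. rewrite dot_cross_r. ring. }
  fold m. rewrite dot_vadd_l, HXm.
  assert (HX : nrm X <= 2 * sg * nrm m).
  { unfold X. pose proof (nrm_vadd_le (vscale s m) (vscale sg n)).
    pose proof (nrm_vscale_le s m). pose proof (nrm_vscale_le sg n). pose proof (nrm_ge0 m).
    rewrite nrm_n_eq_nrm_m, (Rabs_right sg) in * by lra.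
    assert (Rabs s * nrm m <= sg * nrm m) by (apply Rmult_le_compat_r; lra). lra. }
  assert (Hcross : Rabs (dot (cross (vadd X e) u) z) <= (nrm X + nrm e) * nrm z).
  { eapply Rle_trans; [apply Rabs_dot_le|]. apply Rmult_le_compat_r; [apply nrm_ge0|].
    eapply Rle_trans; [apply nrm_cross_le|]. rewrite (nrm_unit u V_unit), Rmult_1_r.
    apply nrm_vadd_le. }
  pose proof (Rabs_dot_le e m). pose proof (nrm_ge0 m). pose proof (nrm_ge0 z).
  pose proof (nrm_ge0 e).
  replace (s * dot m m + dot e m - dot (cross (vadd X e) u) z - s * dot m m)
    with (dot e m + - dot (cross (vadd X e) u) z) by ring.
  eapply Rle_trans; [apply Rabs_triang|]. rewrite Rabs_Ropp. nra.
Qed.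

Lemma transversal_tilt z s sg eta :
  mat_app M z = vadd (vscale s m) (vscale sg n) -> nrm (err z) <= eta * nrm z ->
  sg * dot m m - eta * nrm z * nrm m <= dot (cross (V (vadd p z)) u) m.
Proof.
  intros HMz He. rewrite V_shift_decomp, HMz, dot_cross_vadd_self. fold n.
  rewrite !dot_vadd_l, !dot_vscale_l.
  replace (dot m n) with 0 by (unfold n; rewrite dot_comm; symmetry; apply dot_cross_r).
  rewrite <- !nrm_sqr, nrm_n_eq_nrm_m.
  pose proof (Rabs_dot_le n (err z)). rewrite nrm_n_eq_nrm_m in H.
  pose proof (Rle_abs (- dot n (err z))). rewrite Rabs_Ropp in H0.
  pose proof (nrm_ge0 m).
  assert (nrm m * nrm (err z) <= nrm m * (eta * nrm z)) by (apply Rmult_le_compat_l; lra).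
  rewrite (dot_comm (err z)). nra.
Qed.

Hypothesis M_approx : forall eta, 0 < eta ->
  exists rho, 0 < rho /\ forall z, nrm z < rho -> nrm (err z) <= eta * nrm z.

Lemma transversal_exists v w :
  mat_app M v = n -> mat_app M w = m -> m <> vzero ->
  exists x, cross (V x) u <> vzero /\ dot (cross (V x) u) (vadd q (vopp x)) = 0.
Proof.
  intros Hv Hw Hm.
  set (mu := nrm m). assert (Hmu : 0 < mu) by (apply nrm_pos, Hm).
  assert (Hmm : dot m m = mu * mu) by (symmetry; apply nrm_sqr).
  set (K := nrm v + nrm w + 1).
  assert (HK : 0 < K) by (unfold K; pose proof (nrm_ge0 v); pose proof (nrm_ge0 w); lra).
  set (eta := mu / (4 * K)).
  assert (Heta : 0 < eta) by (unfold eta; apply Rdiv_lt_0_compat; lra).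
  destruct (M_approx eta Heta) as [rho [Hrho Happrox]].
  destruct (exists_small_pos rho (mu / 9) K Hrho ltac:(lra) HK) as [sg [Hsg [HsgK HsgK']]].
  set (z := fun s => vadd (vscale s w) (vscale sg v)).
  assert (HMz : forall s, mat_app M (z s) = vadd (vscale s m) (vscale sg n))
    by (intros s; unfold z; rewrite mat_app_lin, Hv, Hw; reflexivity).
  assert (Hz : forall s, Rabs s <= sg -> nrm (z s) <= sg * K).
  { intros s Hs. eapply Rle_trans; [apply nrm_segment_le; exact Hs|].
    apply Rmult_le_compat_l; unfold K; lra. }
  assert (Herr : forall s, Rabs s <= sg -> nrm (err (z s)) <= eta * nrm (z s))
    by (intros s Hs; apply Happrox; pose proof (Hz s Hs); lra).
  assert (Hsmall : forall s, Rabs s <= sg -> eta * nrm (z s) <= sg * mu / 4).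
  { intros s Hs. replace (sg * mu / 4) with (eta * (sg * K)) by (unfold eta; field; lra).
    apply Rmult_le_compat_l; [lra|]. apply Hz, Hs. }
  set (f := fun s => dot (cross (V (vadd (vadd p (vscale sg v)) (vscale s w))) u)
                         (vadd q (vopp (vadd (vadd p (vscale sg v)) (vscale s w))))).
  assert (Hf : forall s, Rabs s <= sg -> Rabs (f s - s * (mu * mu)) <= sg * (mu * mu) / 2).
  { intros s Hs. unfold f. rewrite line_shift, <- Hmm. fold (z s).
    eapply Rle_trans; [apply (transversal_defect (z s) s sg eta); auto; lra|].
    rewrite Hmm. fold mu. pose proof (Hz s Hs). pose proof (nrm_ge0 (z s)).
    apply transversal_budget; auto; try lra. apply Rmult_le_pos; lra. }
  assert (Hfc : continuity f).
  { apply continuity_coplanarity; intros i Hi.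
    - apply (continuity_along_line (fun r => coord (V r) i)), V_cont, Hi.
    - apply (continuity_along_line (fun r => coord r i)), continuous3_coord. }
  destruct (near_linear_root f sg (mu * mu) Hfc Hsg ltac:(nra) Hf) as [s0 [Hs0' Hf0]].
  exists (vadd (vadd p (vscale sg v)) (vscale s0 w)). split; [|exact Hf0].
  rewrite line_shift. fold (z s0). intros H0.
  pose proof (transversal_tilt (z s0) s0 sg eta (HMz s0) (Herr s0 Hs0')) as Hlow.
  rewrite H0, (dot_comm vzero), dot_vzero_r, Hmm in Hlow. fold mu in Hlow.
  pose proof (Hsmall s0 Hs0').
  assert (eta * nrm (z s0) * mu <= sg * mu / 4 * mu) by (apply Rmult_le_compat_r; lra).
  assert (0 < sg * mu * mu) by (repeat apply Rmult_lt_0_compat; lra).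
  lra.
Qed.

Hypothesis V_line : forall x t, V (vadd x (vscale t (V x))) = V x.

Lemma rank2_excludes_parallel_line a b :
  (forall z, dot u (mat_app M z) = 0) ->
  (forall al be, (al <> 0 \/ be <> 0) ->
     vadd (vscale al (mat_app M a)) (vscale be (mat_app M b)) <> vzero) ->
  ~ on_line V p q -> V q = u \/ V q = vopp u -> False.
Proof.
  intros Horth Hind Hoff Hpar.
  assert (Hu : u <> vzero).
  { intros H. fold u in V_unit. rewrite H in V_unit. unfold dot, vzero in V_unit; simpl in V_unit.
    lra. }
  assert (Hm : m <> vzero).
  { intros H. apply Hoff. apply cross_eq0_collinear in H. fold u in V_unit.
    rewrite V_unit in H. exists (dot u (vadd q (vopp p))). apply vscale1_sub_eq, H. }
  destruct (mat_app_onto_orth M u a b Hu Horth Hind n (dot_cross_l_self u m)) as [v Hv].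
  destruct (mat_app_onto_orth M u a b Hu Horth Hind m (dot_cross_l_self u _)) as [w Hw].
  destruct (transversal_exists v w Hv Hw Hm) as [x [Hx Hcop]].
  destruct (coplanar_decomp _ _ _ Hx Hcop) as [al [be Hdec]].
  apply vadd_sub_decomp in Hdec.
  apply Hx. destruct Hpar as [Hq|Hq].
  - rewrite <- Hq in Hdec. rewrite (line_fibration_meet V x q al (- be) V_line Hdec), Hq.
    apply cross_self.
  - replace (vscale (- be) u) with (vscale be (V q)) in Hdec
      by (rewrite Hq, vscale_vopp; reflexivity).
    rewrite (line_fibration_meet V x q al be V_line Hdec), Hq. apply cross_vopp_self.
Qed.

End TransversalLine.

Theorem mainTheorem3 (V : R3 -> R3) (DV : R3 -> nat -> nat -> R)
  (hfib : line_fibration V) (hJ : is_jacobian V DV)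
  (hcontact : is_contact V DV) (hpar : every_line_has_parallel V) :
  forall p : R3, rank_one (DV p).
Proof.
  destruct hfib as [hsm [hunit hline]]. intros p. split.
  - apply NNPP. intros Hzero. apply (hcontact p).
    rewrite curl_eq0_of_mat_app_eq0; [apply dot_vzero_r|].
    intros v. apply NNPP. intros Hv. apply Hzero. exists v. exact Hv.
  - intros v w. apply NNPP. intros Hdep. destruct (hpar p) as [q [Hoff Hq]].
    apply (rank2_excludes_parallel_line V (DV p) p q (fun i Hi => hsm i Hi 0%nat) (hunit p)
             (jacobian_approx V DV hJ (fun i Hi => hsm i Hi 1%nat) p) hline v w
             (jacobian_orth_of_unit V DV hJ hunit p)); [|exact Hoff|exact Hq].
    intros al be Hnt Hc. apply Hdep. exists al, be. split; [exact Hnt|exact Hc].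
Qed.
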